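(* Let $S\in\mathbb{R}^{m\times n}$ and $x_0\in\mathbb{R}^d$. Let $(x_t)_{t\geqslant0}$ be any sequence satisfying $x_{t+1}\in x_0+H_S^{-1}\,\mathrm{span}\{\nabla f(x_0),\dots,\nabla f(x_t)\}$ for all $t\geqslant0$. Then for every $t\geqslant1$, $$\delta_t\geqslant \ell^*_t(S,x_0):=\frac12\min_{Q\in\mathbb{R}_t[X],\,Q(0)=1}\ \sum_{i=1}^d Q(\lambda_i^{-1})^2\,\xi_i^2 .$$
   Context: Let $A\in\mathbb{R}^{n\times d}$ with $n\geqslant d$, $b\in\mathbb{R}^d$, $\Lambda\in\mathbb{R}^{d\times d}$ diagonal with $\Lambda\succeq I_d$, and $\nu>0$. Set $H=A^\top A+\nu^2\Lambda$, $f(x)=\frac12 x^\top Hx-b^\top x$, $x^*=H^{-1}b$. For $S\in\mathbb{R}^{m\times n}$ set $H_S=A^\top S^\top SA+\nu^2\Lambda$ and $C_S=H^{-1/2}H_SH^{-1/2}$, with eigenvalue decomposition $C_S=\sum_{i=1}^d\lambda_iv_iv_i^\top$ ($\lambda_1\geqslant\dots\geqslant\lambda_d>0$, orthonormal $v_i$). Let $\xi_i=\langle v_i,H^{1/2}(x_0-x^* )\rangle$, $\delta_t=\frac12\|x_t-x^*\|_H^2$ with $\|z\|_H^2=z^\top Hz$, and let $\mathbb{R}_t[X]$ denote the real polynomials of degree at most $t$. *)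

From HB Require Import structures.
From mathcomp Require Import all_boot all_order all_algebra.
From mathcomp Require Import classical_sets reals.
Set Implicit Arguments. Unset Strict Implicit. Unset Printing Implicit Defensive.
Import Order.TTheory GRing.Theory Num.Theory.
Local Open Scope ring_scope.

Section Defs.
Variable R : realType.

Definition Hmat (n d : nat) (A : 'M[R]_(n, d)) (Lam : 'M[R]_d) (nu : R) : 'M[R]_d :=
  A^T *m A + (nu ^+ 2) *: Lam.

Definition HSmat (m n d : nat) (S : 'M[R]_(m, n)) (A : 'M[R]_(n, d))
  (Lam : 'M[R]_d) (nu : R) : 'M[R]_d :=
  A^T *m S^T *m S *m A + (nu ^+ 2) *: Lam.

Definition fobj (d : nat) (H : 'M[R]_d) (b : 'cV[R]_d) (x : 'cV[R]_d) : R :=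
  2^-1 * (x^T *m H *m x) ord0 ord0 - (b^T *m x) ord0 ord0.

(* gradient of f (H symmetric): grad f(x) = H x - b *)
Definition grad_f (d : nat) (H : 'M[R]_d) (b : 'cV[R]_d) (x : 'cV[R]_d) : 'cV[R]_d :=
  H *m x - b.

Definition xstar (d : nat) (H : 'M[R]_d) (b : 'cV[R]_d) : 'cV[R]_d := invmx H *m b.

Definition Hnorm2 (d : nat) (H : 'M[R]_d) (z : 'cV[R]_d) : R := (z^T *m H *m z) ord0 ord0.

Definition delta (d : nat) (H : 'M[R]_d) (b : 'cV[R]_d) (x : 'cV[R]_d) : R :=
  2^-1 * Hnorm2 H (x - xstar H b).

(* ell*_t = 1/2 min_{Q in R_t[X], Q(0)=1} sum_i Q(lam_i^{-1})^2 xi_i^2 ;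
   the min (which is attained) is written as an infimum. *)
Definition ell_star (d : nat) (t : nat) (lam xi : 'I_d -> R) : R :=
  2^-1 * inf ([set y : R | exists Q : {poly R},
     (size Q <= t.+1)%N /\ Q.[0] = 1 /\
     y = \sum_(i < d) (Q.[(lam i)^-1]) ^+ 2 * (xi i) ^+ 2])%classic.

End Defs.

(** In the whitened coordinates [w = V^T H^{1/2} (x - x^* )] the preconditioned
    gradient step [H_S^{-1} grad f(x) = H_S^{-1} H (x - x^* )] becomes
    multiplication by the diagonal matrix [diag(lambda_i^{-1})], so by induction
    every iterate satisfies [w_t = Q_t(diag(lambda_i^{-1})) w_0] for a
    polynomial [Q_t] of degree at most [t] with [Q_t(0) = 1].  Since
    [delta_t = |w_t|^2 / 2 = 1/2 sum_i Q_t(lambda_i^{-1})^2 xi_i^2], the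
    polynomial [Q_t] is a competitor in the minimum defining [ell^*_t]. *)

From HB Require Import structures.
From mathcomp Require Import all_boot all_order all_algebra.
From mathcomp Require Import classical_sets reals.
Set Implicit Arguments. Unset Strict Implicit. Unset Printing Implicit Defensive.
Import Order.TTheory GRing.Theory Num.Theory.
Local Open Scope ring_scope.

Definition residual_poly (R : nzSemiRingType) (t : nat) (Q : {poly R}) :=
  (size Q <= t.+1)%N /\ Q.[0] = 1.

Section Krylov.
Variables (R : comNzRingType) (d : nat).

Lemma residual_poly1 : residual_poly 0 (1 : {poly R}).
Proof. by rewrite /residual_poly size_poly1 hornerC. Qed.

Lemma residual_polyS t (c : 'I_t.+1 -> R) (Q : 'I_t.+1 -> {poly R}) :
  (forall k : 'I_t.+1, residual_poly k (Q k)) ->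
  residual_poly t.+1 (1 + 'X * \sum_(k < t.+1) c k *: Q k).
Proof.
move=> resQ; split; last by rewrite hornerD hornerC hornerM hornerX mul0r addr0.
have size_comb : (size (\sum_(k < t.+1) c k *: Q k)%R <= t.+1)%N.
  apply: leq_trans (size_sum _ _ _) _; apply/bigmax_leqP => k _.
  apply: leq_trans (size_scale_leq _ _) _.
  by have [sizeQk _] := resQ k; apply: leq_trans sizeQk (ltn_ord k).
apply: leq_trans (size_polyD _ _) _; rewrite geq_max size_poly1.
by apply: leq_trans (size_polyMleq _ _) _; rewrite size_polyX.
Qed.

Lemma krylov_diag_residual_poly (mu : 'rV[R]_d) (w : nat -> 'cV[R]_d) :
  (forall t, exists c : 'I_t.+1 -> R,
     w t.+1 = w 0%N + diag_mx mu *m \sum_(k < t.+1) c k *: w k) ->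
  forall t, exists2 Q : {poly R}, residual_poly t Q &
    forall i, w t i 0 = Q.[mu 0 i] * w 0%N i 0.
Proof.
move=> wS; elim/ltn_ind => -[_|t IH].
  by exists 1; [exact: residual_poly1 | move=> i; rewrite hornerC mul1r].
have [Q resQ wQ] := fin_all_exists2 (fun k : 'I_t.+1 => IH k (ltn_ord k)).
have [c ->] := wS t.
exists (1 + 'X * \sum_(k < t.+1) c k *: Q k); first exact: residual_polyS.
move=> i; rewrite mul_diag_mx !mxE summxE hornerD hornerC hornerM hornerX.
rewrite horner_sum mulrDl mul1r -mulrA mulr_suml; congr (_ + _ * _).
by apply: eq_bigr => k _; rewrite mxE wQ hornerZ mulrA.
Qed.

End Krylov.

Lemma posdef_unitmx (R : numFieldType) n (P : 'M[R]_n) :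
  (forall z : 'cV_n, z != 0 -> 0 < (z^T *m P *m z) 0 0) -> P \in unitmx.
Proof.
move=> Ppos; rewrite unitmxE unitfE; apply/det0P => -[v v0 vP].
have /Ppos : v^T != 0 by rewrite -(inj_eq (@trmx_inj _ _ _)) trmxK trmx0.
by rewrite trmxK vP mul0mx mxE ltxx.
Qed.

Lemma mulmx1_invmx (R : comUnitRingType) n (A B : 'M[R]_n) :
  A *m B = 1%:M -> invmx A = B.
Proof.
move=> AB; have [Au _] := mulmx1_unit AB.
by rewrite -[invmx A]mulmx1 -AB mulmxA mulVmx ?mul1mx.
Qed.

Section DiagInverse.
Variables (R : fieldType) (n : nat) (mu : 'rV[R]_n).
Hypothesis mu_neq0 : forall i, mu 0 i != 0.

Lemma mulmx_diagV : diag_mx mu *m diag_mx (map_mx GRing.inv mu) = 1%:M.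
Proof.
rewrite mulmx_diag -diag_const_mx; congr diag_mx.
by apply/rowP => i; rewrite !mxE divff.
Qed.

Lemma invmx_diag : invmx (diag_mx mu) = diag_mx (map_mx GRing.inv mu).
Proof. exact: mulmx1_invmx mulmx_diagV. Qed.

End DiagInverse.

Section Whitening.
Variables (R : realType) (d : nat) (P V D : 'M[R]_d) (b : 'cV[R]_d).
Hypotheses (Pu : P \in unitmx) (VtV : V^T *m V = 1%:M) (Du : D \in unitmx).

Local Notation H := (P *m P).
Local Notation HS := (P *m (V *m D *m V^T) *m P).
Local Notation w z := (V^T *m P *m (z - xstar H b)).

Lemma invmx_orthoconj : invmx HS = invmx P *m V *m invmx D *m V^T *m invmx P.
Proof.
apply: mulmx1_invmx; rewrite !mulmxA mulmxK // -(mulmxA _ V^T V) VtV mulmx1.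
by rewrite mulmxK // -(mulmxA P V) (mulmx1C VtV) mulmx1 mulmxV.
Qed.

Lemma whiten_precond : V^T *m P *m invmx HS *m H = invmx D *m (V^T *m P).
Proof.
by rewrite invmx_orthoconj !mulmxA mulmxK // VtV mul1mx mulmxKV // mulmxA.
Qed.

Lemma grad_fE z : grad_f H b z = H *m (z - xstar H b).
Proof.
have Hu : H \in unitmx by rewrite unitmx_mul Pu.
by rewrite /grad_f /xstar mulmxBr mulmxA mulmxV // mul1mx.
Qed.

Lemma whitened_iterates (x : nat -> 'cV[R]_d) :
  (forall t, exists c : 'I_t.+1 -> R,
     x t.+1 = x 0%N + invmx HS *m \sum_(k < t.+1) c k *: grad_f H b (x k)) ->
  forall t, exists c : 'I_t.+1 -> R,
     w (x t.+1) = w (x 0%N) + invmx D *m \sum_(k < t.+1) c k *: w (x k).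
Proof.
move=> xS t; have [c ->] := xS t; exists c.
rewrite addrAC mulmxDr; congr (_ + _); rewrite (mulmxA (V^T *m P)) !mulmx_sumr.
apply: eq_bigr => k _; rewrite grad_fE -!scalemxAr.
by rewrite (mulmxA (_ *m invmx HS)) whiten_precond -mulmxA.
Qed.

Hypothesis PT : P^T = P.

Lemma Hnorm2_whiten z : Hnorm2 H z = \sum_i (V^T *m P *m z) i 0 ^+ 2.
Proof.
rewrite /Hnorm2; have -> : z^T *m H *m z = (V^T *m P *m z)^T *m (V^T *m P *m z).
  by rewrite !trmx_mul PT trmxK !mulmxA -(mulmxA _ V) (mulmx1C VtV) mulmx1.
by rewrite mxE; apply: eq_bigr => i _; rewrite mxE expr2.
Qed.

End Whitening.

Lemma ell_star_le (R : realType) d t (lam xi : 'I_d -> R) (Q : {poly R}) :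
  residual_poly t Q ->
  ell_star t lam xi <= 2^-1 * \sum_(i < d) Q.[(lam i)^-1] ^+ 2 * xi i ^+ 2.
Proof.
move=> [sizeQ Q0]; rewrite /ell_star ler_wpM2l ?invr_ge0 ?ler0n //.
apply: ge_inf; last by exists Q.
exists 0 => _ [Q' [_ [_ ->]]].
by apply: sumr_ge0 => i _; rewrite mulr_ge0 ?sqr_ge0.
Qed.

Theorem lemma3p1 (R : realType) (n d m : nat) (A : 'M[R]_(n, d)) (b : 'cV[R]_d)
  (lamb : 'rV[R]_d) (nu : R) (S : 'M[R]_(m, n)) (x0 : 'cV[R]_d)
  (P : 'M[R]_d) (V : 'M[R]_d) (lam : 'I_d -> R) (x : nat -> 'cV[R]_d) :
  (d <= n)%N ->
  (forall i, 1 <= lamb ord0 i) ->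
  0 < nu ->
  (* P = H^{1/2}: the symmetric positive definite square root of H *)
  P^T = P ->
  (forall z : 'cV[R]_d, z != 0 -> 0 < (z^T *m P *m z) ord0 ord0) ->
  P *m P = Hmat A (diag_mx lamb) nu ->
  (* eigenvalue decomposition C_S = sum_i lam_i v_i v_i^T, v_i = i-th column of V *)
  V^T *m V = 1%:M ->
  invmx P *m HSmat S A (diag_mx lamb) nu *m invmx P = V *m diag_mx (\row_i lam i) *m V^T ->
  (forall i j : 'I_d, (i <= j)%N -> lam j <= lam i) ->
  (forall i, 0 < lam i) ->
  (* the iterates *)
  x 0%N = x0 ->
  (forall t : nat, exists c : 'I_t.+1 -> R,
     x t.+1 = x0 + invmx (HSmat S A (diag_mx lamb) nu) *m
       \sum_(k < t.+1) c k *: grad_f (Hmat A (diag_mx lamb) nu) b (x k)) ->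
  forall t : nat, (1 <= t)%N ->
    delta (Hmat A (diag_mx lamb) nu) b (x t) >=
    ell_star t lam (fun i => ((col i V)^T *m P *m
                         (x0 - xstar (Hmat A (diag_mx lamb) nu) b)) ord0 ord0).
Proof.
move=> _ _ _ PT Ppos PP VtV hC _ lam_gt0 <- xS t _.
set HS := HSmat _ _ _ _ in hC xS; rewrite -{}PP in xS *.
have lam_neq0 i : (\row_i lam i) 0 i != 0 by rewrite mxE gt_eqF.
have Pu := posdef_unitmx Ppos.
have [Du _] := mulmx1_unit (mulmx_diagV lam_neq0).
have HSE : HS = P *m (V *m diag_mx (\row_i lam i) *m V^T) *m P.
  by rewrite -hC !mulmxA mulmxV // mul1mx mulmxKV.
rewrite {}HSE in xS; have := whitened_iterates Pu VtV Du xS.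
rewrite invmx_diag // => /(krylov_diag_residual_poly
  (w := fun k => V^T *m P *m (x k - xstar (P *m P) b)))/(_ t)[Q resQ wQ].
apply: le_trans (ell_star_le _ _ resQ) _.
rewrite /delta (Hnorm2_whiten VtV PT) le_eqVlt; apply/predU1l; congr (_ * _).
apply: eq_bigr => i _.
by rewrite wQ tr_col -!row_mul !mxE exprMn.
Qed.
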